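(* Let $R$ be a prime right noetherian ring whose right Krull dimension is a finite integer $n$, let $m\le n$ be an integer, let $X=\{p\in \operatorname{Spec}R : |R/p| = m\}$, and let $V=\bigcap_{p\in X}C(p)$. Define $k=\{I : I\cap V\neq\emptyset\}$, $w=\{I : R/I \text{ is } V\text{-torsion}\}$, $g=\{I : |R/I|<m\}$ (families of right ideals of $R$). Then: (i) $w$ and $g$ are Gabriel filters; (ii) if $X$ has the right intersection condition, then $g\subseteq k$.
   Context: All modules are right modules; $|M|$ denotes the (right) Krull dimension of $M$. For an ideal $A$, $C(A)$ is the set of elements of $R$ regular modulo $A$. A right $R$-module $M$ is $V$-torsion if for every $x\in M$ there is $t\in V$ with $xt=0$. A family $F$ of right ideals is a Gabriel filter if: (a) $I\in F$ and $I\subseteq J$ (a right ideal) imply $J\in F$; (b) $I,J\in F$ imply $I\cap J\in F$; (c) $I\in F$ and $x\in R$ imply $x^{-1}(I)=\{a\in R: xa\in I\}\in F$. $X$ has the right intersection condition if for every right ideal $I$ with $I\cap C(p)\neq\emptyset$ for all $p\in X$, one has $I\cap V\neq\emptyset$. *)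

From HB Require Import structures.
From mathcomp Require Import all_boot all_algebra.
Set Implicit Arguments. Unset Strict Implicit. Unset Printing Implicit Defensive.
Import GRing.Theory.
Local Open Scope ring_scope.

Section KrullDefs.
Variable R : nzRingType.

Definition incl (A B : R -> Prop) : Prop := forall x, A x -> B x.
Definition fullset : R -> Prop := fun _ => True.
Definition zeroset : R -> Prop := fun x => x = 0.

Definition right_ideal (I : R -> Prop) : Prop :=
  [/\ I 0, (forall x y, I x -> I y -> I (x - y)) & (forall x r, I x -> I (x * r))].

Definition ideal (I : R -> Prop) : Prop :=
  right_ideal I /\ (forall x r, I x -> I (r * x)).

Definition prime_ideal (p : R -> Prop) : Prop :=
  [/\ ideal p, ~ p 1 & forall a b, (forall r, p (a * r * b)) -> p a \/ p b].

Definition prime_ring : Prop := prime_ideal zeroset.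

Definition right_noetherian : Prop :=
  forall I : nat -> R -> Prop,
    (forall i, right_ideal (I i)) -> (forall i, incl (I i) (I i.+1)) ->
    exists N, forall i, (N <= i)%N -> incl (I i) (I N).

(* Krull dimension (Gabriel-Rentschler deviation) of the right module B/A,
   where A ⊆ B are right ideals; submodules of B/A are the right ideals
   between A and B.
   kdim_lt j A B  <->  |B/A| < j, i.e. |B/A| <= j-1 (with |0| = -1):
   - |B/A| <= -1 iff B/A = 0;
   - |B/A| <= k (k >= 0) iff every descending chain of submodules has all but
     finitely many successive factors of dimension <= k-1. *)
Fixpoint kdim_lt (j : nat) (A B : R -> Prop) : Prop :=
  match j with
  | 0 => incl B A
  | j'.+1 =>
      forall x : nat -> R -> Prop,
        (forall i, right_ideal (x i)) ->
        (forall i, incl A (x i) /\ incl (x i) B) ->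
        (forall i, incl (x i.+1) (x i)) ->
        exists N, forall i, (N <= i)%N -> kdim_lt j' (x i.+1) (x i)
  end.

Definition kdim_eq (d : nat) (A B : R -> Prop) : Prop :=
  kdim_lt d.+1 A B /\ ~ kdim_lt d A B.

Definition regmod (A : R -> Prop) (c : R) : Prop :=
  forall x, (A (c * x) -> A x) /\ (A (x * c) -> A x).

Definition Xset (m : nat) (p : R -> Prop) : Prop :=
  prime_ideal p /\ kdim_eq m p fullset.

Definition Vof (X : (R -> Prop) -> Prop) (c : R) : Prop :=
  forall p, X p -> regmod p c.

Definition torsion_by (V : R -> Prop) (I : R -> Prop) : Prop :=
  forall x, exists t, V t /\ I (x * t).

Definition kfam (m : nat) (I : R -> Prop) : Prop :=
  right_ideal I /\ exists v, I v /\ Vof (Xset m) v.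
Definition wfam (m : nat) (I : R -> Prop) : Prop :=
  right_ideal I /\ torsion_by (Vof (Xset m)) I.
Definition gfam (m : nat) (I : R -> Prop) : Prop :=
  right_ideal I /\ kdim_lt m I fullset.

Definition gabriel_filter (F : (R -> Prop) -> Prop) : Prop :=
  [/\ (forall I J, F I -> right_ideal J -> incl I J -> F J),
      (forall I J, F I -> F J -> F (fun x => I x /\ J x)) &
      (forall I x, F I -> F (fun a => I (x * a)))].

Definition right_intersection_condition (X : (R -> Prop) -> Prop) : Prop :=
  forall I, right_ideal I ->
    (forall p, X p -> exists c, I c /\ regmod p c) ->
    exists v, I v /\ Vof X v.

End KrullDefs.

From mathcomp Require Import all_boot all_algebra.
From Stdlib Require Import Classical ClassicalEpsilon.
Set Implicit Arguments. Unset Strict Implicit. Unset Printing Implicit Defensive.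
Import GRing.Theory.
Local Open Scope ring_scope.

(* Both families are closed under finite intersections and under I |-> x^-1 I: for w
   because V is multiplicatively closed, for g because R/(I cap J) embeds in
   R/I (+) R/J and R/x^-1 I is isomorphic to (xR + I)/I, a submodule of R/I.
   For (ii) take I with |R/I| < m and p in X. Then (I + p)/p is an essential right
   ideal of the prime right noetherian ring R/p: a right ideal K/p meeting it
   trivially embeds in R/I, and as R/p is prime, R/p is a quotient of a submodule of
   finitely many copies of K/p, which would force |R/p| < m. By Goldie's theorem
   (I + p)/p contains an element regular in R/p; its component in I is regular
   modulo p, and the right intersection condition provides an element of I in V. *)

Section RightIdeals.
Variable R : nzRingType.
Implicit Types (A B C I X Y : R -> Prop) (x y : R).

Definition cap_set A B : R -> Prop := fun z => A z /\ B z.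
Definition add_set A B : R -> Prop := fun z => exists a b, A a /\ B b /\ z = a + b.
Definition lmul_add x A B : R -> Prop := fun z => exists a b, A a /\ B b /\ z = x * a + b.
Definition lpreim x A : R -> Prop := fun a => A (x * a).

Lemma right_ideal0 I : right_ideal I -> I 0. Proof. by case. Qed.

Lemma right_idealB I x y : right_ideal I -> I x -> I y -> I (x - y).
Proof. by case=> _ H _; apply: H. Qed.

Lemma right_idealM I x r : right_ideal I -> I x -> I (x * r).
Proof. by case=> _ _ H; apply: H. Qed.

Lemma right_idealN I x : right_ideal I -> I x -> I (- x).
Proof. by move=> HI Ix; rewrite -sub0r; apply: right_idealB (right_ideal0 HI) Ix. Qed.

Lemma right_idealD I x y : right_ideal I -> I x -> I y -> I (x + y).
Proof. by move=> HI Ix Iy; rewrite -[y]opprK; apply: right_idealB (right_idealN HI Iy). Qed.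

Lemma right_ideal_full : right_ideal (@fullset R). Proof. by []. Qed.

Lemma right_ideal_cap A B : right_ideal A -> right_ideal B -> right_ideal (cap_set A B).
Proof.
move=> HA HB; split; first by split; apply: right_ideal0.
- by move=> x y [? ?] [? ?]; split; apply: right_idealB.
- by move=> x r [? ?]; split; apply: right_idealM.
Qed.

Lemma right_ideal_lmul_add x A B :
  right_ideal A -> right_ideal B -> right_ideal (lmul_add x A B).
Proof.
move=> HA HB; split.
- by exists 0, 0; rewrite mulr0 addr0; do ![split] => //; apply: right_ideal0.
- move=> u v [a [b [Aa [Bb ->]]]] [a' [b' [Aa' [Bb' ->]]]].
  exists (a - a'), (b - b'); do ![split]; try exact: right_idealB.
  by rewrite mulrBr opprD addrACA.
- move=> u r [a [b [Aa [Bb ->]]]]; exists (a * r), (b * r).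
  by do ![split]; [apply: right_idealM|apply: right_idealM|rewrite mulrDl mulrA].
Qed.

Lemma right_ideal_add A B : right_ideal A -> right_ideal B -> right_ideal (add_set A B).
Proof.
move=> HA HB; split.
- by exists 0, 0; rewrite addr0; do ![split] => //; apply: right_ideal0.
- move=> u v [a [b [Aa [Bb ->]]]] [a' [b' [Aa' [Bb' ->]]]].
  exists (a - a'), (b - b'); do ![split]; try exact: right_idealB.
  by rewrite opprD addrACA.
- move=> u r [a [b [Aa [Bb ->]]]]; exists (a * r), (b * r).
  by do ![split]; [apply: right_idealM|apply: right_idealM|rewrite mulrDl].
Qed.

Lemma add_setl A B a : right_ideal B -> A a -> add_set A B a.
Proof.
by move=> HB Aa; exists a, 0; rewrite addr0; do ![split] => //; apply: right_ideal0.
Qed.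

Lemma add_setr A B b : right_ideal A -> B b -> add_set A B b.
Proof.
by move=> HA Bb; exists 0, b; rewrite add0r; do ![split] => //; apply: right_ideal0.
Qed.

Lemma lmul_addl x A B a : right_ideal B -> A a -> lmul_add x A B (x * a).
Proof.
by move=> HB Aa; exists a, 0; rewrite addr0; do ![split] => //; apply: right_ideal0.
Qed.

Lemma lmul_addr x A B b : right_ideal A -> B b -> lmul_add x A B b.
Proof.
by move=> HA Bb; exists 0, b; rewrite mulr0 add0r; do ![split] => //; apply: right_ideal0.
Qed.

Lemma right_ideal_lpreim x I : right_ideal I -> right_ideal (lpreim x I).
Proof.
move=> HI; split; first by rewrite /lpreim mulr0; apply: right_ideal0.
- by move=> a b h1 h2; rewrite /lpreim mulrBr; apply: right_idealB.
- by move=> a r h; rewrite /lpreim mulrA; apply: right_idealM.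
Qed.

End RightIdeals.

Arguments right_ideal_full {R}.

Section KrullDimension.
Variable R : nzRingType.
Implicit Types (A B C I J X Y : R -> Prop) (x : R).

Definition interval A B X := [/\ right_ideal X, incl A X & incl X B].

Definition interval_embedding A B A' B' (phi : (R -> Prop) -> R -> Prop) :=
  (forall X, interval A B X -> interval A' B' (phi X)) /\
  (forall X Y, interval A B X -> interval A B Y -> incl X Y <-> incl (phi X) (phi Y)).

Lemma intervalW A B A1 B1 X : incl A A1 -> incl B1 B -> interval A1 B1 X -> interval A B X.
Proof. by move=> HA HB [HX H1 H2]; split=> // z; [move/HA/H1|move/H2/HB]. Qed.

Lemma interval_embedding_restrict A B A' B' phi X Y :
  interval_embedding A B A' B' phi -> interval A B X -> interval A B Y -> incl X Y ->
  interval_embedding X Y (phi X) (phi Y) phi.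
Proof.
move=> [Hmap Hord] HX HY HXY.
have sub Z : interval X Y Z -> interval A B Z.
  by case: HX HY => _ AX _ [_ _ YB]; apply: intervalW.
split=> [Z HZ | Z W HZ HW]; last exact: Hord (sub Z HZ) (sub W HW).
have IZ := sub Z HZ; have [HZ' _ _] := Hmap Z IZ; case: HZ => _ XZ ZY.
by split=> //; [apply/(Hord _ _ HX IZ)|apply/(Hord _ _ IZ HY)].
Qed.

Lemma kdim_lt_incl j A B : incl B A -> kdim_lt j A B.
Proof.
elim: j A B => [|j IH] A B BA //= x _ Hx _.
exists 0%N => i _; apply: IH => z /(proj2 (Hx i)) /BA; exact: (proj1 (Hx i.+1)).
Qed.

Lemma kdim_lt_embed j A B A' B' phi :
  right_ideal A -> right_ideal B -> incl A B -> interval_embedding A B A' B' phi ->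
  kdim_lt j A' B' -> kdim_lt j A B.
Proof.
elim: j A B A' B' => [|j IH] A B A' B' HA HB AB [Hmap Hord] /=.
  have IA : interval A B A by split.
  have IB : interval A B B by split.
  have [_ _ phiB] := Hmap B IB; have [_ phiA _] := Hmap A IA.
  by move=> B'A'; apply/(Hord _ _ IB IA) => z /phiB /B'A' /phiA.
move=> Kphi x Hx xAB xdec.
have Ix i : interval A B (x i) by case: (xAB i).
have Iphi i := Hmap _ (Ix i).
have [N HN] : exists N, forall i, (N <= i)%N -> kdim_lt j (phi (x i.+1)) (phi (x i)).
  apply: Kphi => i; [by case: (Iphi i)|by case: (Iphi i)|].
  exact/(Hord _ _ (Ix i.+1) (Ix i)).
exists N => i /HN; apply: IH (Hx i.+1) (Hx i) (xdec i) _.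
exact: interval_embedding_restrict (conj Hmap Hord) (Ix i.+1) (Ix i) (xdec i).
Qed.

Lemma kdim_lt_subinterval j A B A' B' :
  right_ideal A -> right_ideal B -> incl A B -> incl A' A -> incl B B' ->
  kdim_lt j A' B' -> kdim_lt j A B.
Proof.
move=> HA HB AB A'A BB'; apply: (kdim_lt_embed (phi := id)) => //.
by split=> [X|//]; apply: intervalW.
Qed.

Lemma kdim_lt_capr j A B C : right_ideal A -> right_ideal B -> right_ideal C ->
  incl A B -> incl B (add_set A C) ->
  kdim_lt j (cap_set A C) (cap_set B C) -> kdim_lt j A B.
Proof.
move=> HA HB HC AB BAC K; apply: (kdim_lt_embed (phi := fun X => cap_set X C) HA HB AB _ K).
split=> [X [HX AX XB] | X Y [HX AX XB] [HY AY YB]].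
  by split=> [|z []|z []]; [exact: right_ideal_cap|move/AX|move/XB].
split=> [XY z [/XY]//|XYC z Xz].
have [a [c [Aa [Cc zE]]]] := BAC z (XB z Xz).
have cE : c = z - a by rewrite zE addrC addKr.
have Xc : X c by rewrite cE; apply: right_idealB => //; exact: AX.
have [Yc _] := XYC c (conj Xc Cc).
by rewrite zE; apply: right_idealD => //; exact: AY.
Qed.

Lemma kdim_lt_addr j A B C : right_ideal A -> right_ideal B -> right_ideal C ->
  incl A B -> incl (cap_set B C) A ->
  kdim_lt j (add_set A C) (add_set B C) -> kdim_lt j A B.
Proof.
move=> HA HB HC AB BCA K; apply: (kdim_lt_embed (phi := fun X => add_set X C) HA HB AB _ K).
split=> [X [HX AX XB] | X Y [HX AX XB] [HY AY YB]].
  split=> [|z [a [c [Aa [Cc ->]]]]|z [a [c [Xa [Cc ->]]]]]; first exact: right_ideal_add.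
    by exists a, c; do ![split] => //; exact: AX.
  by exists a, c; do ![split] => //; exact: XB.
split=> [XY z [a [c [Xa [Cc ->]]]]|XYC z Xz].
  by exists a, c; do ![split] => //; exact: XY.
have [y [c [Yy [Cc zE]]]] := XYC z (add_setl HC Xz).
have cE : c = z - y by rewrite zE addrC addKr.
have Ac : A c.
  by apply: BCA; split=> //; rewrite cE; apply: right_idealB; [|exact: XB|exact: YB].
by rewrite zE; apply: right_idealD => //; exact: AY.
Qed.

Lemma kdim_lt_ext j A C B : right_ideal A -> right_ideal C -> right_ideal B ->
  incl A C -> incl C B -> kdim_lt j A C -> kdim_lt j C B -> kdim_lt j A B.
Proof.
elim: j A C B => [|j IH] A C B HA HC HB AC CB /=; first by move=> CA BC z /BC /CA.
move=> KAC KCB x Hx xAB xdec.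
have [N1 HN1] : exists N, forall i, (N <= i)%N ->
    kdim_lt j (cap_set (x i.+1) C) (cap_set (x i) C).
  apply: KAC => [i|i|i z [/xdec xz Cz]] //; first exact: right_ideal_cap.
  by split=> [z Az|z []//]; split; [exact: (proj1 (xAB i))|exact: AC].
have [N2 HN2] : exists N, forall i, (N <= i)%N ->
    kdim_lt j (add_set (x i.+1) C) (add_set (x i) C).
  apply: KCB => [i|i|i z [a [c [/xdec xa [Cc ->]]]]]; first exact: right_ideal_add.
    split=> [z|z [a [c [xa [Cc ->]]]]]; first exact: add_setr.
    by apply: right_idealD => //; [exact: (proj2 (xAB i))|exact: CB].
  by exists a, c.
exists (maxn N1 N2) => i; rewrite geq_max => /andP [/HN1 K1 /HN2 K2].
pose D := add_set (x i.+1) (cap_set (x i) C).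
have HD : right_ideal D by apply: right_ideal_add => //; apply: right_ideal_cap.
have x1D : incl (x i.+1) D by move=> z; apply: add_setl; apply: right_ideal_cap.
have Dx : incl D (x i).
  by move=> z [a [c [x1a [[xc _] ->]]]]; apply: right_idealD => //; exact: xdec.
apply: (IH (x i.+1) D (x i)) => //.
- apply: (kdim_lt_capr (Hx i.+1) HD HC x1D).
    by move=> z [a [c [x1a [[_ Cc] ->]]]]; exists a, c.
  apply: kdim_lt_subinterval K1 => //; try exact: right_ideal_cap.
  + by move=> z [/x1D Dz Cz].
  + by move=> z [/Dx xz Cz].
- apply: (kdim_lt_addr HD (Hx i) HC Dx); first by move=> z; apply: add_setr.
  apply: kdim_lt_subinterval K2 => //; try exact: right_ideal_add.
  + by move=> z [a [c [/Dx xa [Cc ->]]]]; exists a, c.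
  + by move=> z [a [c [/x1D Da [Cc ->]]]]; exists a, c.
Qed.

Lemma kdim_lt_disjoint j A B C : right_ideal A -> right_ideal B -> right_ideal C ->
  incl A B -> incl (cap_set B C) A -> kdim_lt j C (@fullset R) -> kdim_lt j A B.
Proof.
move=> HA HB HC AB BCA KC; apply: (kdim_lt_addr HA HB HC AB BCA).
apply: kdim_lt_subinterval KC => //; try exact: right_ideal_add.
  by move=> z [a [c [/AB Ba [Cc ->]]]]; exists a, c.
by move=> z; apply: add_setr.
Qed.

Lemma kdim_lt_cap j I J : right_ideal I -> right_ideal J ->
  kdim_lt j I (@fullset R) -> kdim_lt j J (@fullset R) ->
  kdim_lt j (cap_set I J) (@fullset R).
Proof.
move=> HI HJ KI KJ; have HIJ := right_ideal_cap HI HJ.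
have IJI : incl (cap_set I J) I by move=> z [].
apply: (kdim_lt_ext HIJ HI right_ideal_full IJI) => //.
exact: (kdim_lt_disjoint HIJ HI HJ IJI).
Qed.

Lemma kdim_lt_lpreim j x I B : right_ideal I -> right_ideal B -> incl I B ->
  (forall a, B (x * a)) -> kdim_lt j I B -> kdim_lt j (lpreim x I) (@fullset R).
Proof.
move=> HI HB IB xB; have HxI := right_ideal_lpreim x HI.
apply: (kdim_lt_embed (phi := fun X => lmul_add x X I) HxI right_ideal_full) => //.
split=> [X [HX _ _] | X Y [HX xIX _] [HY xIY _]].
  split=> [|z|z [a [q [_ [Iq ->]]]]]; [exact: right_ideal_lmul_add|exact: lmul_addr|].
  by apply: right_idealD => //; exact: IB.
split=> [XY z [a [q [Xa [Iq ->]]]]|XYI a Xa].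
  by exists a, q; do ![split] => //; exact: XY.
have [b [q [Yb [Iq xaE]]]] := XYI (x * a) (lmul_addl x HI Xa).
rewrite -(subrK b a); apply: right_idealD => //; apply: xIY.
by rewrite /lpreim mulrBr xaE addrC addKr.
Qed.

End KrullDimension.

Lemma noetherian_maximal (R : nzRingType) (T : Type) (Q : T -> Prop) (f : T -> R -> Prop) :
  right_noetherian R -> (forall a, Q a -> right_ideal (f a)) -> (exists a, Q a) ->
  exists2 a, Q a & forall b, Q b -> incl (f a) (f b) -> incl (f b) (f a).
Proof.
move=> Hnoeth Hf [a0 Qa0]; apply: NNPP => Hno.
pose P a b := Q b /\ incl (f a) (f b) /\ ~ incl (f b) (f a).
have Hstep a : Q a -> exists b, P a b.
  move=> Qa; apply: NNPP => Hb; apply: Hno; exists a => // b Qb fab.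
  by apply: NNPP => fba; apply: Hb; exists b.
pose step a := epsilon (inhabits a0) (P a).
pose chain i := iter i step a0.
have Qchain i : Q (chain i).
  elim: i => [|i IH] //=; have [] := epsilon_spec (inhabits a0) _ (Hstep _ IH); done.
have Pchain i : P (chain i) (chain i.+1) := epsilon_spec (inhabits a0) _ (Hstep _ (Qchain i)).
have [N HN] := Hnoeth (fun i => f (chain i)) (fun i => Hf _ (Qchain i))
  (fun i => proj1 (proj2 (Pchain i))).
by have [_ [_ []]] := Pchain N; apply: HN.
Qed.

Section PrimeIdeal.
Variables (R : nzRingType) (p : R -> Prop).
Hypothesis Hp : prime_ideal p.
Implicit Types (E J K L : R -> Prop) (a c s x y z : R).

Local Notation rann x := (lpreim x p).

Lemma p_right_ideal : right_ideal p. Proof. by case: Hp => [[]]. Qed.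
Lemma p0 : p 0. Proof. exact: right_ideal0 p_right_ideal. Qed.
Lemma pD x y : p x -> p y -> p (x + y). Proof. exact: right_idealD p_right_ideal. Qed.
Lemma pB x y : p x -> p y -> p (x - y). Proof. exact: right_idealB p_right_ideal. Qed.
Lemma pN x : p x -> p (- x). Proof. exact: right_idealN p_right_ideal. Qed.
Lemma pM x r : p x -> p (x * r). Proof. exact: right_idealM p_right_ideal. Qed.
Lemma pL x r : p x -> p (r * x). Proof. by case: Hp => [[_ H]] _ _; apply: H. Qed.
Lemma p_prime a b : (forall r, p (a * r * b)) -> p a \/ p b.
Proof. by case: Hp => _ _; apply. Qed.

Lemma right_ideal_rann x : right_ideal (rann x).
Proof. exact: right_ideal_lpreim p_right_ideal. Qed.

Lemma p_sub_rann x : incl p (rann x).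
Proof. by move=> s; apply: pL. Qed.

Definition essential E :=
  forall K, right_ideal K -> incl p K -> incl (cap_set K E) p -> incl K p.

Lemma essential_mono E E' : essential E -> incl E E' -> essential E'.
Proof. by move=> HE EE' K HK pK KE'; apply: HE => // z [Kz /EE' E'z]; apply: KE'. Qed.

Lemma essential_lpreim E r : right_ideal E -> incl p E -> essential E ->
  essential (lpreim r E).
Proof.
move=> HE pE Hess K HK pK KE.
have rKp : incl (lmul_add r K p) p.
  apply: Hess => [||z [[a [q [Ka [pq ->]]]] Ez]].
  - exact: right_ideal_lmul_add p_right_ideal.
  - by move=> z; apply: lmul_addr.
  have Era : E (r * a) by rewrite -(addrK q (r * a)); apply: right_idealB => //; exact: pE.
  by apply: pD => //; apply: pL; apply: KE.
move=> z Kz; apply: KE; split=> //; apply: pE; apply: rKp.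
by apply: lmul_addl p_right_ideal Kz.
Qed.

Definition ann_stable y := forall s, p (y * (y * s)) -> p (y * s).

Section Noetherian.
Hypothesis Hnoeth : right_noetherian R.

Lemma rann_pow_stationary a :
  exists N, forall i, (N <= i)%N -> incl (rann (a ^+ i)) (rann (a ^+ N)).
Proof.
apply: Hnoeth => [i|i s]; first exact: right_ideal_rann.
by rewrite /lpreim exprS -mulrA; apply: pL.
Qed.

Lemma ann_stable_pow a : exists N, ann_stable (a ^+ N.+1).
Proof.
have [N HN] := rann_pow_stationary a; exists N => s.
rewrite mulrA -exprD => /(HN _ (leq_trans (leqnSn N) (leq_addr _ _))).
by rewrite /lpreim exprS -mulrA; apply: pL.
Qed.

Lemma mul_pow_comm a x n : a * (x * a) ^+ n = (a * x) ^+ n * a.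
Proof.
elim: n => [|n IH]; first by rewrite !expr0 mul1r mulr1.
by rewrite exprSr mulrA IH exprSr -!mulrA.
Qed.

(* Levitzki's theorem, in R/p. *)
Lemma nil_right_ideal L : right_ideal L ->
  (forall a, L a -> exists k, p (a ^+ k)) -> incl L p.
Proof.
move=> HL Lnil a0 La0; apply: NNPP => npa0.
have [a [La npa] amax] := noetherian_maximal (Q := fun a => L a /\ ~ p a) Hnoeth
  (fun a _ => right_ideal_rann a) (ex_intro _ a0 (conj La0 npa0)).
suff axa x : p (a * x * a) by case: (p_prime axa).
have [N axN] := Lnil (a * x) (right_idealM x HL La).
have [k [npk pk1]] : exists k, ~ p (a * (x * a) ^+ k) /\ p (a * (x * a) ^+ k.+1).
  have : p (a * (x * a) ^+ N) by rewrite mul_pow_comm; apply: pM.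
  elim: N {axN} => [|k IH]; first by rewrite expr0 mulr1.
  by case: (classic (p (a * (x * a) ^+ k))) => [/IH|]; last exists k.
have xaL : L (a * (x * a) ^+ k) by apply: right_idealM.
have sub : incl (rann a) (rann (a * (x * a) ^+ k)).
  by move=> s; rewrite /lpreim mul_pow_comm -mulrA; apply: pL.
have := amax _ (conj xaL npk) sub (x * a).
by rewrite /lpreim -mulrA -exprSr mulrA; apply.
Qed.

Lemma ann_stable_elem L : right_ideal L -> ~ incl L p ->
  exists y, [/\ L y, ~ p y & ann_stable y].
Proof.
move=> HL Lp.
have [a La npow] : exists2 a, L a & forall k, ~ p (a ^+ k).
  apply: NNPP => H; apply: Lp; apply: nil_right_ideal => // a La.
  by apply: NNPP => Hk; apply: H; exists a => // k pk; apply: Hk; exists k.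
have [N HN] := ann_stable_pow a.
by exists (a ^+ N.+1); split=> //; rewrite exprS; apply: right_idealM.
Qed.

Lemma essential_rann_nilpotent z : essential (rann z) -> exists k, p (z ^+ k).
Proof.
move=> Hz; have [N HN] := ann_stable_pow z; exists N.+1.
set y := z ^+ N.+1 in HN *.
have Hy : essential (rann y).
  apply: (essential_mono Hz) => s; rewrite /lpreim /y exprSr -mulrA; apply: pL.
have yRp : incl (lmul_add y (@fullset R) p) p.
  apply: Hy => [||w [[a [q [_ [pq ->]]]] h]].
  - exact: right_ideal_lmul_add p_right_ideal.
  - by move=> q; apply: lmul_addr.
  apply: pD => //; apply: HN; move: h; rewrite /lpreim mulrDr => h.
  by rewrite -(addrK (y * q) (y * (y * a))); apply: pB => //; apply: pL.
by apply: yRp; rewrite -[X in lmul_add _ _ _ X]mulr1; exact: lmul_addl p_right_ideal _.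
Qed.

(* The right singular ideal of R/p is zero. *)
Lemma essential_rann x : essential (rann x) -> p x.
Proof.
move=> Hx; pose L z := exists s, p (z - x * s).
have HL : right_ideal L.
  split; first by exists 0; rewrite mulr0 subr0; exact: p0.
  - move=> a b [s hs] [t ht]; exists (s - t).
    have -> : a - b - x * (s - t) = (a - x * s) - (b - x * t).
      by rewrite mulrBr !opprB addrACA [RHS]addrACA [- (x * s) + _]addrC.
    exact: pB.
  - by move=> a r [s hs]; exists (s * r); rewrite mulrA -mulrBl; apply: pM.
apply: (nil_right_ideal HL); last by exists 1; rewrite mulr1 subrr; exact: p0.
move=> z [s hs]; apply: essential_rann_nilpotent.
have Hs : essential (lpreim s (rann x)).
  by apply: essential_lpreim => //; [exact: right_ideal_rann|exact: p_sub_rann].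
apply: (essential_mono Hs) => a; rewrite /lpreim mulrA => h.
by rewrite -(subrK (x * s) z) mulrDl; apply: pD => //; apply: pM.
Qed.

Fixpoint lmul_chain c K k : R -> Prop :=
  if k is k'.+1 then lmul_add c (lmul_chain c K k') K else K.

(* If K meets cR trivially, the sums K + cK + ... + c^k K are direct; the chain must stop. *)
Lemma essential_lmul c : incl (rann c) p -> essential (lmul_add c (@fullset R) p).
Proof.
move=> cp K HK pK KcR.
pose W := lmul_chain c K.
have HW k : right_ideal (W k).
  by elim: k => [|k IH] //=; apply: right_ideal_lmul_add.
have KW k : incl K (W k) by case: k => [|k] //= z; apply: lmul_addr.
have Wup k : incl (W k) (W k.+1).
  elim: k => [|k IH]; first exact: KW.
  by move=> z [w [t [Ww [Kt ->]]]]; exists w, t; do ![split] => //; apply: IH.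
have cKp t : K (c * t) -> p (c * t).
  by move=> Kct; apply: KcR; split=> //; apply: lmul_addl p_right_ideal _.
have key k t : W k (c ^+ k.+1 * t) -> p t.
  elim: k t => [|k IH] t /=; first by rewrite expr1 => /cKp /cp.
  move=> [w [t0 [Ww [Kt0 E]]]].
  have t0E : t0 = c * (c ^+ k.+1 * t - w) by rewrite mulrBr mulrA -exprS E addrAC subrr add0r.
  have pt0 : p t0 by rewrite t0E; apply: cKp; rewrite -t0E.
  apply: IH; rewrite -(subrK w (c ^+ k.+1 * t)); apply: right_idealD => //.
  by apply: KW; apply: pK; apply: cp; rewrite /lpreim -t0E.
have [N HN] := Hnoeth HW Wup.
move=> z Kz; apply: (key N); apply: (HN N.+1 (leqnSn N)).
elim: N.+1 {HN} => [|k IH] /=; first by rewrite expr0 mul1r.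
exists (c ^+ k * z), 0; rewrite exprS -mulrA addr0; do ![split] => //; exact: right_ideal0.
Qed.

Lemma left_regular c x : incl (rann c) p -> p (x * c) -> p x.
Proof.
move=> cp xc; apply: essential_rann; apply: (essential_mono (essential_lmul cp)).
move=> z [s [q [_ [pq ->]]]]; rewrite /lpreim mulrDr mulrA.
by apply: pD; [apply: pM|apply: pL].
Qed.

(* A state records c = x_1 + ... + x_k, U = x_1 R + ... + x_k R + p and
   A = rann x_1 cap ... cap rann x_k, where the x_i R are independent modulo p. *)
Record goldie_state := GoldieState { st_ann : R -> Prop; st_sum : R -> Prop; st_elt : R }.

Record goldie_inv E (st : goldie_state) : Prop := GoldieInv {
  ann_right_ideal : right_ideal (st_ann st);
  p_sub_ann : incl p (st_ann st);
  sum_right_ideal : right_ideal (st_sum st);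
  elt_mem : E (st_elt st);
  elt_indep : forall s z, st_ann st z -> p (st_elt st * s + z) -> st_ann st s /\ p z;
  sum_indep : forall u z, st_sum st u -> st_ann st z -> p (u + z) -> p z }.

Definition goldie_next (st : goldie_state) x : goldie_state :=
  GoldieState (cap_set (st_ann st) (rann x)) (lmul_add x (@fullset R) (st_sum st))
    (st_elt st + x).

Lemma goldie_inv_next E st x : right_ideal E -> goldie_inv E st ->
  E x -> st_ann st x -> ann_stable x -> goldie_inv E (goldie_next st x).
Proof.
move=> HE [HA pA HU Ec Ic IU] Ex Ax xstab.
have indep s z : st_ann st z -> p (x * z) -> p (x * s + z) -> p (x * s) /\ p z.
  move=> Az xz xsz; have pxs : p (x * s).
    apply: xstab; rewrite -(addrK (x * z) (x * (x * s))) -mulrDr.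
    by apply: pB => //; apply: pL.
  by split=> //; rewrite -(addKr (x * s) z); apply: pD => //; apply: pN.
have Axsz s z : st_ann st z -> st_ann st (x * s + z).
  by move=> Az; apply: right_idealD => //; apply: right_idealM.
split=> /=.
- exact: right_ideal_cap (right_ideal_rann x).
- by move=> z pz; split; [apply: pA|apply: p_sub_rann].
- exact: right_ideal_lmul_add.
- exact: right_idealD.
- move=> s z [Az xz]; rewrite mulrDl -addrA => /(Ic _ _ (Axsz s z Az)).
  by case=> As /(indep s z Az xz) [].
- move=> _ z [s [u [_ [Uu ->]]]] [Az xz].
  rewrite [x * s + u]addrC -addrA => /(IU _ _ Uu (Axsz s z Az)).
  by case/(indep s z Az xz).
Qed.

(* Goldie's theorem for R/p: a state with maximal sum admits no further step, and then
   rann c is contained in its annihilator, which lies in p. *)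
Lemma essential_regular E : right_ideal E -> incl p E -> essential E ->
  exists2 c, E c & incl (rann c) p.
Proof.
move=> HE pE Hess.
have inv0 : goldie_inv E (GoldieState (@fullset R) p 0).
  split=> //=; [exact: p_right_ideal|exact: right_ideal0| |].
  - by move=> s z _; rewrite mul0r add0r.
  - by move=> u z pu _ h; rewrite -(addKr u z); apply: pD => //; apply: pN.
have [st Ist stmax] := noetherian_maximal Hnoeth (fun st => @sum_right_ideal E st)
  (ex_intro _ _ inv0).
have [HA pA HU Ec Ic IU] := Ist.
have EAp : incl (cap_set E (st_ann st)) p.
  apply: NNPP => /(ann_stable_elem (right_ideal_cap HE HA)) [x [[Ex Ax] npx xstab]].
  have Inext := goldie_inv_next HE Ist Ex Ax xstab.
  have Ux : st_sum st x.
    apply: (stmax _ Inext) => [u|]; first exact: lmul_addr.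
    by rewrite /= -[X in lmul_add _ _ _ X]mulr1; exact: lmul_addl HU _.
  by apply: npx; apply: (IU (- x) x) => //; [apply: right_idealN|rewrite addNr; exact: p0].
exists (st_elt st) => // s cs.
apply: (Hess _ HA pA) => [z [Az Ez]|]; first by apply: EAp.
by have [] := Ic s 0 (right_ideal0 HA); first by rewrite addr0.
Qed.

Definition rann_seq (l : seq R) : R -> Prop := fun s => forall k, k \in l -> p (k * s).

Lemma right_ideal_rann_seq l : right_ideal (rann_seq l).
Proof.
split=> [k _|a b ha hb k kl|a r ha k kl]; first by rewrite mulr0; exact: p0.
  by rewrite mulrBr; apply: pB; [apply: ha|apply: hb].
by rewrite mulrA; apply: pM; apply: ha.
Qed.

Lemma kdim_lt_rann_seq j K l : right_ideal K -> incl p K -> kdim_lt j p K ->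
  (forall k, k \in l -> K k) -> kdim_lt j (rann_seq l) (@fullset R).
Proof.
move=> HK pK KpK; elim: l => [|k l IH] lK; first by apply: kdim_lt_incl => s _ k.
have Kk : kdim_lt j (rann k) (@fullset R).
  apply: (kdim_lt_lpreim p_right_ideal HK pK) KpK => a.
  by apply: (right_idealM _ HK); apply: lK; rewrite mem_head.
have Kl := IH (fun k' kl => lK k' (mem_behead (s := k :: l) kl)).
have Kkl := kdim_lt_cap (right_ideal_rann k) (right_ideal_rann_seq l) Kk Kl.
apply: kdim_lt_subinterval Kkl => //; first exact: right_ideal_rann_seq.
by move=> s [ks ls] k'; rewrite inE => /predU1P [->|/ls].
Qed.

(* Since R/p is prime, the right ideal of those z annihilating, modulo p, the common
   annihilator of finitely many elements of K is essential; Goldie's theorem puts a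
   regular element in it. *)
Lemma rann_seq_sub K : right_ideal K -> incl p K -> ~ incl K p ->
  exists2 l, (forall k, k \in l -> K k) & incl (rann_seq l) p.
Proof.
move=> HK pK Kp.
pose T z := exists2 l, (forall k, k \in l -> K k) & incl (rann_seq l) (rann z).
have HT : right_ideal T.
  split=> [|a b [l Kl Hl] [l' Kl' Hl']|a r [l Kl Hl]].
  - by exists [::] => // s _; rewrite /lpreim mul0r; exact: p0.
  - exists (l ++ l') => [k|s Hs]; first by rewrite mem_cat => /orP [/Kl|/Kl'].
    by rewrite /lpreim mulrBl; apply: pB; [apply: Hl|apply: Hl'] => k kl; apply: Hs;
      rewrite mem_cat kl ?orbT.
  - exists [seq k * r | k <- l] => [_ /mapP [k /Kl Kk ->]|s Hs]; first exact: right_idealM.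
    rewrite /lpreim -mulrA; apply: Hl => k kl; rewrite mulrA; apply: Hs.
    by apply/mapP; exists k.
have TL y z : T z -> T (y * z).
  by case=> l Kl Hl; exists l => // s /Hl; rewrite /lpreim -mulrA; apply: pL.
have KT k : K k -> T k.
  by move=> Kk; exists [:: k] => [k'|s]; [rewrite inE => /eqP ->|apply; rewrite mem_head].
have [k0 Kk0 npk0] : exists2 k0, K k0 & ~ p k0.
  by apply: NNPP => H; apply: Kp => z Kz; apply: NNPP => npz; apply: H; exists z.
have essT : essential T.
  move=> K' HK' pK' K'T z K'z.
  have zk0 r : p (z * r * k0).
    by apply: K'T; split; [do 2!apply: (right_idealM _ HK')|apply: TL; apply: KT].
  by case: (p_prime zk0).
have pT : incl p T by move=> z pz; exists [::] => // s _; exact: pM.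
have [c [l Kl Hl] cp] := essential_regular HT pT essT.
by exists l => // s /Hl /cp.
Qed.

Lemma essential_add_kdim j J : right_ideal J -> kdim_lt j J (@fullset R) ->
  ~ kdim_lt j p (@fullset R) -> essential (add_set J p).
Proof.
move=> HJ KJ Kp K HK pK KJp; apply: NNPP => nKp.
have [l Kl lp] := rann_seq_sub HK pK nKp.
have KpK : kdim_lt j p K.
  apply: (kdim_lt_disjoint p_right_ideal HK HJ pK) KJ => z [Kz Jz].
  by apply: KJp; split=> //; apply: add_setl => //; exact: p_right_ideal.
apply: Kp; apply: kdim_lt_subinterval (kdim_lt_rann_seq HK pK KpK Kl) => //.
exact: p_right_ideal.
Qed.

Lemma regmod_mem j J : right_ideal J -> kdim_lt j J (@fullset R) ->
  ~ kdim_lt j p (@fullset R) -> exists2 c, J c & regmod p c.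
Proof.
move=> HJ KJ Kp.
have HE := right_ideal_add HJ p_right_ideal.
have pE : incl p (add_set J p) by move=> z; apply: add_setr.
have [_ [a [q [Ja [pq ->]]]] cp] := essential_regular HE pE (essential_add_kdim HJ KJ Kp).
exists a => // x; split=> h.
- by apply: cp; rewrite /lpreim mulrDl; apply: pD => //; exact: pM.
- by apply: (left_regular cp); rewrite mulrDr; apply: pD => //; exact: pL.
Qed.

End Noetherian.
End PrimeIdeal.

Section GabrielFilters.
Variable R : nzRingType.
Implicit Types (A I V : R -> Prop) (s t : R).

Lemma regmodM A t s : regmod A t -> regmod A s -> regmod A (t * s).
Proof.
move=> Ht Hs x; split; first by rewrite -mulrA => /(proj1 (Ht _)) /(proj1 (Hs _)).
by rewrite mulrA => /(proj2 (Hs _)) /(proj2 (Ht _)).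
Qed.

Lemma torsion_gabriel V : (forall t s, V t -> V s -> V (t * s)) ->
  gabriel_filter (fun I => right_ideal I /\ torsion_by V I).
Proof.
move=> VM; split=> [I J [HI It] HJ IJ | I J [HI It] [HJ Jt] | I x [HI It]].
- by split=> // a; have [t [Vt Iat]] := It a; exists t; split=> //; apply: IJ.
- split=> [|a]; first exact: right_ideal_cap.
  have [t [Vt Iat]] := It a; have [s [Vs Jats]] := Jt (a * t).
  exists (t * s); rewrite mulrA; split; [exact: VM|split=> //; exact: right_idealM].
- split=> [|a]; first exact: right_ideal_lpreim.
  by have [t [Vt Ixat]] := It (x * a); exists t; rewrite /lpreim mulrA.
Qed.

Lemma wfam_gabriel m : gabriel_filter (@wfam R m).
Proof. by apply: torsion_gabriel => t s Vt Vs q Xq; apply: regmodM; [apply: Vt|apply: Vs]. Qed.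

Lemma gfam_gabriel j : gabriel_filter (@gfam R j).
Proof.
split=> [I J [HI KI] HJ IJ | I J [HI KI] [HJ KJ] | I x [HI KI]].
- by split=> //; apply: kdim_lt_subinterval KI.
- by split; [exact: right_ideal_cap|exact: kdim_lt_cap].
- by split; [exact: right_ideal_lpreim|exact: kdim_lt_lpreim right_ideal_full _ _ KI].
Qed.

Lemma gfam_sub_kfam m I : right_noetherian R -> right_intersection_condition (@Xset R m) ->
  gfam m I -> kfam m I.
Proof.
move=> Hnoeth RIC [HI KI]; split=> //; apply: RIC => // q [Hq [_ Kq]].
by have [c] := regmod_mem Hq Hnoeth HI KI Kq; exists c.
Qed.

End GabrielFilters.

Theorem mainTheorem6 (R : nzRingType) (n m : nat) :
  @prime_ring R -> @right_noetherian R ->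
  kdim_eq n (@zeroset R) (@fullset R) -> (m <= n)%N ->
  gabriel_filter (@wfam R m) /\ gabriel_filter (@gfam R m) /\
  (right_intersection_condition (@Xset R m) ->
     forall I, @gfam R m I -> @kfam R m I).
Proof.
move=> _ Hnoeth _ _; split; [exact: wfam_gabriel|split; first exact: gfam_gabriel].
by move=> RIC I; apply: gfam_sub_kfam.
Qed.
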